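(* Let $\mathbb L$ be a non-trivial finite lattice (more than one element). For every constant $D>1$ there exists a constant $D'>1$ such that there is a linear reduction from $\mathsf{Lattice\text{-}Eval}((\{0,1\};\wedge,\vee),D)$ restricted to instances with $\ell=1$ to $\mathsf{Lattice\text{-}Eval}(\mathbb L,D')$.
   Context: For a finite lattice $\mathbb L=(L;\wedge,\vee)$ and a constant $D>1$, $\mathsf{Lattice\text{-}Eval}(\mathbb L,D)$ is the assignment problem whose instances consist of: a circuit $C$ on a variable set $V$ over the basis $\{\wedge,\vee\}$ (fan-in 2) of depth less than $D+D\log_2|V|$; an element $\ell\in L$; and weights $w:V\to[0,1]$ with $\sum_x w(x)=1$. Assignments are maps $f:V\to L$; $f$ is satisfying if $C(f)\ge\ell$. $\mathrm{dist}_{\mathcal I}(f)$ is the minimum over satisfying $g$ of $\sum_{x:f(x)\ne g(x)}w(x)$. A linear reduction from assignment problem $\mathcal P$ to $\mathcal P'$: given an instance $\mathcal I$ of $\mathcal P$ with variable set $V$ and an assignment $f$, it (possibly randomly) produces an instance $\mathcal I'$ of $\mathcal P'$ with variable set $V'$, $|V'|=O(|V|)$, and an assignment $f'$ such that (i) if $f$ satisfies $\mathcal I$ then $f'$ satisfies $\mathcal I'$; (ii) there is a constant $c_1>0$ with: for every $\epsilon\in(0,1)$, if $\mathrm{dist}_{\mathcal I}(f)\ge\epsilon$ then $\Pr[\mathrm{dist}_{\mathcal I'}(f')\ge c_1\epsilon]\ge 9/10$; (iii) every value of $f'$ can be computed with at most a constant $c_2$ queries to $f$. *)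

From HB Require Import structures.
From mathcomp Require Import all_boot all_order.
From Stdlib Require Import Reals.

Set Implicit Arguments.
Unset Strict Implicit.
Unset Printing Implicit Defensive.

Import Order.Theory.
Local Open Scope order_scope.

(* A circuit on variable set V, given by its (tree) unfolding. *)
Inductive circuit (V : Type) : Type :=
| CVar : V -> circuit V
| CMeet : circuit V -> circuit V -> circuit V
| CJoin : circuit V -> circuit V -> circuit V.

Arguments CVar {V}.
Arguments CMeet {V}.
Arguments CJoin {V}.

Fixpoint cdepth (V : Type) (c : circuit V) : nat :=
  match c with
  | CVar _ => 0
  | CMeet c1 c2 => (maxn (cdepth c1) (cdepth c2)).+1
  | CJoin c1 c2 => (maxn (cdepth c1) (cdepth c2)).+1
  end.

Fixpoint ceval (d : Order.disp_t) (L : latticeType d) (V : Type)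
    (f : V -> L) (c : circuit V) : L :=
  match c with
  | CVar x => f x
  | CMeet c1 c2 => ceval f c1 `&` ceval f c2
  | CJoin c1 c2 => ceval f c1 `|` ceval f c2
  end.

Record instance (d : Order.disp_t) (L : finLatticeType d) (V : finType) :=
  Instance {
    icirc : circuit V;
    ilevel : L;
    iweight : V -> R
  }.

Definition log2 (x : R) : R := (ln x / ln 2)%R.

Definition lattice_eval_instance (d : Order.disp_t) (L : finLatticeType d)
    (D : R) (V : finType) (I : instance L V) : Prop :=
  (INR (cdepth (icirc I)) < D + D * log2 (INR #|V|))%R /\
  (forall x : V, 0 <= iweight I x <= 1)%R /\
  \big[Rplus/R0]_(x : V) iweight I x = R1.

Definition satisfies (d : Order.disp_t) (L : finLatticeType d) (V : finType)
    (I : instance L V) (f : V -> L) : bool :=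
  ilevel I <= ceval f (icirc I).

Definition wdist (d : Order.disp_t) (L : finLatticeType d) (V : finType)
    (I : instance L V) (f g : V -> L) : R :=
  \big[Rplus/R0]_(x : V | f x != g x) iweight I x.

(* dist_I(f) = min over satisfying g of wdist; the initial value 1 of the
   iterated minimum never matters when a satisfying g exists, since weights
   sum to 1 (and the all-top assignment is always satisfying). *)
Definition dist (d : Order.disp_t) (L : finLatticeType d) (V : finType)
    (I : instance L V) (f : V -> L) : R :=
  \big[Rmin/R1]_(g : {ffun V -> L} | satisfies I g) wdist I f g.

Inductive qtree (V A B : Type) : Type :=
| QLeaf : B -> qtree V A B
| QQuery : V -> (A -> qtree V A B) -> qtree V A B.

Arguments QLeaf {V A B}.
Arguments QQuery {V A B}.

Fixpoint qeval (V A B : Type) (f : V -> A) (t : qtree V A B) : B :=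
  match t with
  | QLeaf b => b
  | QQuery x k => qeval f (k (f x))
  end.

Inductive qdepth_le (V A B : Type) : nat -> qtree V A B -> Prop :=
| QDLeaf : forall n b, qdepth_le n (QLeaf b)
| QDQuery : forall n x k, (forall a, qdepth_le n (k a)) ->
    qdepth_le n.+1 (QQuery x k).

(* Given an instance I on V, the reduction draws a random seed s from a
   finite probability space (seed I, prob I); the output instance has
   variable set 'I_(outsize I s) and is outinst I s; the output assignment
   f' is y |-> qeval f (outassign I s y), i.e. each value f'(y) is computed
   by a query procedure on f. *)
Record reduction (d d' : Order.disp_t) (L : finLatticeType d)
    (L' : finLatticeType d') := Reduction {
  seed : forall V : finType, instance L V -> finType;
  prob : forall (V : finType) (I : instance L V), seed I -> R;
  outsize : forall (V : finType) (I : instance L V), seed I -> nat;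
  outinst : forall (V : finType) (I : instance L V) (s : seed I),
      instance L' 'I_(outsize s);
  outassign : forall (V : finType) (I : instance L V) (s : seed I),
      'I_(outsize s) -> qtree V L L'
}.

Arguments seed {d d' L L'} r {V} I.
Arguments prob {d d' L L'} r {V I} s.
Arguments outsize {d d' L L'} r {V I} s.
Arguments outinst {d d' L L'} r {V I} s.
Arguments outassign {d d' L L'} r {V I} s y.

Definition out_assignment (d d' : Order.disp_t) (L : finLatticeType d)
    (L' : finLatticeType d') (r : reduction L L') (V : finType)
    (I : instance L V) (s : seed r I) (f : V -> L) : 'I_(outsize r s) -> L' :=
  fun y => qeval f (outassign r s y).

Arguments out_assignment {d d' L L'} r {V I} s f.

Definition linear_reduction (d d' : Order.disp_t) (L : finLatticeType d)
    (L' : finLatticeType d')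
    (P : forall V : finType, instance L V -> Prop)
    (P' : forall V : finType, instance L' V -> Prop)
    (r : reduction L L') : Prop :=
  (forall (V : finType) (I : instance L V), P V I ->
     (forall s : seed r I, 0 <= prob r s)%R /\
     \big[Rplus/R0]_(s : seed r I) prob r s = R1) /\
  (forall (V : finType) (I : instance L V) (s : seed r I), P V I ->
     P' _ (outinst r s)) /\
  (exists c0 : nat, forall (V : finType) (I : instance L V) (s : seed r I),
     P V I -> outsize r s <= c0 * #|V|)%N /\
  (forall (V : finType) (I : instance L V) (s : seed r I) (f : V -> L),
     P V I -> satisfies I f -> satisfies (outinst r s) (out_assignment r s f)) /\
  (exists c1 : R, (0 < c1)%R /\
     forall (V : finType) (I : instance L V) (f : V -> L) (eps : R),
       P V I -> (0 < eps < 1)%R -> (eps <= dist I f)%R ->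
       (9 / 10 <= \big[Rplus/R0]_(s : seed r I |
                       Rle_dec (c1 * eps) (dist (outinst r s) (out_assignment r s f)))
                     prob r s)%R) /\
  (exists c2 : nat, forall (V : finType) (I : instance L V) (s : seed r I)
       (y : 'I_(outsize r s)), qdepth_le c2 (outassign r s y)).

(* Let bot be the least element of L and bot < hi.  The map bool -> L sending
   false, true to bot, hi is a lattice embedding, so a circuit evaluated on an
   embedded assignment gives the embedded value, and satisfying assignments
   (level true, resp. hi) are preserved.  Conversely y |-> (y != bot) maps an
   assignment satisfying the circuit at level hi to one satisfying it at level
   true, because {y | y != bot} is a prime filter, and it disagrees with a
   Boolean f only where the L-assignment disagrees with the embedding of f.
   Hence distances do not shrink, and merely renaming the variables is a
   linear reduction, with D' = D and c1 = 1. *)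
From Pilot Require Import Defs.
From HB Require Import structures.
From mathcomp Require Import all_boot all_order.
From Stdlib Require Import Reals Lra.

Set Implicit Arguments.
Unset Strict Implicit.
Unset Printing Implicit Defensive.
Import Order.Theory.
Local Open Scope order_scope.

Lemma Rplus_associative : associative Rplus.
Proof. by move=> x y z; rewrite Rplus_assoc. Qed.

HB.instance Definition _ :=
  Monoid.isComLaw.Build R R0 Rplus Rplus_associative Rplus_comm Rplus_0_l.

Lemma Rsum_le (I : Type) (r : seq I) (P : pred I) (F G : I -> R) :
  (forall i, P i -> F i <= G i)%R ->
  (\big[Rplus/R0]_(i <- r | P i) F i <= \big[Rplus/R0]_(i <- r | P i) G i)%R.
Proof.
move=> leFG; apply: (big_ind2 (fun a b => a <= b)%R) => //; first exact: Rle_refl.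
by move=> *; apply: Rplus_le_compat.
Qed.

Lemma Rsum_enum_val (V : finType) (P : pred V) (F : V -> R) :
  \big[Rplus/R0]_(y : 'I_#|V| | P (enum_val y)) F (enum_val y) =
  \big[Rplus/R0]_(x | P x) F x.
Proof. by rewrite -(big_enum_val_cond P F). Qed.

Lemma Rmin_big_le (T : eqType) (r : seq T) (P : pred T) (F : T -> R) x :
  x \in r -> P x -> (\big[Rmin/R1]_(i <- r | P i) F i <= F x)%R.
Proof.
elim: r => // a r IHr; rewrite inE big_cons => /predU1P[<- -> | xr Px].
  exact: Rmin_l.
by case: (P a); [apply: Rle_trans (Rmin_r _ _) _|]; apply: IHr.
Qed.

Lemma Rmin_big_le1 (T : Type) (r : seq T) (P : pred T) (F : T -> R) :
  (\big[Rmin/R1]_(i <- r | P i) F i <= R1)%R.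
Proof.
elim: r => [|a r IHr]; rewrite ?big_nil ?big_cons; first exact: Rle_refl.
by case: (P a) => //; apply: Rle_trans (Rmin_r _ _) IHr.
Qed.

Lemma finLattice_bottom_lt (d : Order.disp_t) (L : finLatticeType d) :
  (1 < #|L|)%N -> exists bot hi : L, bot < hi /\ forall y, bot <= y.
Proof.
case/card_gt1P=> x0 [x1 [_ _ x01]].
pose bot := \big[Order.meet/x0]_(y : L) y.
have bot_le y : bot <= y.
  by rewrite /bot (big_rem_AC _ _ _ _ (mem_index_enum y)) /= leIl.
exists bot; have [x0_bot|x0_neq] := eqVneq x0 bot.
  by exists x1; split=> //; rewrite lt_def bot_le andbT -x0_bot eq_sym.
by exists x0; split=> //; rewrite lt_def bot_le andbT.
Qed.

Section Circuits.

Variables (V W : Type).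

Fixpoint cmap (h : V -> W) (c : circuit V) : circuit W :=
  match c with
  | CVar x => CVar (h x)
  | CMeet c1 c2 => CMeet (cmap h c1) (cmap h c2)
  | CJoin c1 c2 => CJoin (cmap h c1) (cmap h c2)
  end.

Lemma cdepth_cmap (h : V -> W) (c : circuit V) : cdepth (cmap h c) = cdepth c.
Proof. by elim: c => //= c1 -> c2 ->. Qed.

Variables (d : Order.disp_t) (L : latticeType d).

Lemma ceval_cmap (h : V -> W) (f : W -> L) (c : circuit V) :
  ceval f (cmap h c) = ceval (f \o h) c.
Proof. by elim: c => //= c1 -> c2 ->. Qed.

Lemma eq_ceval (f g : V -> L) (c : circuit V) : f =1 g -> ceval f c = ceval g c.
Proof. by move=> eq_fg; elim: c => //= c1 -> c2 ->. Qed.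

Variables (bot hi : L).

Definition embed_bool (b : bool) : L := if b then hi else bot.

Lemma ceval_embed_bool (f : V -> bool) (c : circuit V) :
  bot <= hi -> ceval (embed_bool \o f) c = embed_bool (ceval f c).
Proof.
move=> bot_le_hi; elim: c => //= c1 -> c2 ->.
- by case: (ceval f c1); case: (ceval f c2);
    rewrite /= ?meetxx ?(meet_l bot_le_hi) ?(meet_r bot_le_hi).
- by case: (ceval f c1); case: (ceval f c2);
    rewrite /= ?joinxx ?(join_l bot_le_hi) ?(join_r bot_le_hi).
Qed.

Lemma ceval_neq_bot (g : V -> L) (c : circuit V) :
  (forall y, bot <= y) -> ceval g c != bot -> ceval (fun x => g x != bot) c.
Proof.
move=> bot_le; elim: c => [//|c1 IH1 c2 IH2|c1 IH1 c2 IH2] /=.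
- move=> meet_neq; apply/andP; split; [apply: IH1|apply: IH2];
    apply: contraNneq meet_neq => ->; apply/eqP.
  + exact: meet_l.
  + exact: meet_r.
- have [-> /=|c1_neq _] := eqVneq (ceval g c1) bot; last by rewrite IH1.
  by rewrite (join_r (bot_le _)) => /IH2 ->; rewrite joinx1.
Qed.

End Circuits.

Lemma dist_le_pullback (d d' : Order.disp_t) (L : finLatticeType d)
    (L' : finLatticeType d') (V V' : finType) (I : instance L V)
    (I' : instance L' V') (f : V -> L) (f' : V' -> L') :
  (forall g' : {ffun V' -> L'}, satisfies I' g' ->
     exists2 g : {ffun V -> L},
       satisfies I g & (wdist I f g <= wdist I' f' g')%R) ->
  (Defs.dist I f <= Defs.dist I' f')%R.
Proof.
move=> pullback; rewrite {2}/Defs.dist.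
apply: (big_ind (fun v => Defs.dist I f <= v)%R).
- exact: Rmin_big_le1.
- by move=> *; apply: Rmin_glb.
move=> g' /pullback[g sat_g le_g]; apply: Rle_trans le_g.
exact: Rmin_big_le (mem_index_enum g) sat_g.
Qed.

Lemma satisfies_level_true (V : finType) (I : instance bool V) (f : V -> bool) :
  ilevel I -> satisfies I f = ceval f (icirc I).
Proof. by rewrite /satisfies => ->; case: (ceval f (icirc I)). Qed.

Section EmbedReduction.

Variables (d : Order.disp_t) (L : finLatticeType d) (bot hi : L).
Hypothesis bot_lt_hi : bot < hi.
Hypothesis bot_le : forall y, bot <= y.

Definition embed_instance (V : finType) (I : instance bool V) :
    instance L 'I_#|V| :=
  Instance (cmap enum_rank (icirc I)) hi (iweight I \o enum_val).

Definition embed_reduction : reduction bool L :=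
  @Reduction _ _ bool L
    (fun V I => unit : finType)
    (fun V I s => R1)
    (fun V I s => #|V|)
    (fun V I s => embed_instance I)
    (fun V I s y => QQuery (enum_val y) (fun b => QLeaf (embed_bool bot hi b))).

Lemma embed_instance_lattice_eval (D : R) (V : finType) (I : instance bool V) :
  lattice_eval_instance D I -> lattice_eval_instance D (embed_instance I).
Proof.
case=> [depthI [weightI sumI]]; split; last split.
- by rewrite /= cdepth_cmap card_ord.
- by move=> y; apply: weightI.
- by rewrite /= -sumI -Rsum_enum_val.
Qed.

Lemma embed_instance_satisfies (V : finType) (I : instance bool V) (f : V -> bool) :
  ilevel I -> satisfies I f ->
  satisfies (embed_instance I) (embed_bool bot hi \o f \o enum_val).
Proof.
move=> levelI; rewrite satisfies_level_true // /satisfies /= ceval_cmap => sat_f.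
rewrite (@eq_ceval _ _ _ _ (embed_bool bot hi \o f)) => [|x]; last first.
  by rewrite /= enum_rankK.
by rewrite ceval_embed_bool ?(ltW bot_lt_hi) //; case: (ceval f (icirc I)) sat_f.
Qed.

Lemma embed_instance_dist (V : finType) (I : instance bool V) (f : V -> bool) :
  ilevel I -> (forall x, 0 <= iweight I x)%R ->
  (Defs.dist I f <=
   Defs.dist (embed_instance I) (embed_bool bot hi \o f \o enum_val))%R.
Proof.
move=> levelI weight_ge0; apply: dist_le_pullback => g' sat_g'.
exists [ffun x => g' (enum_rank x) != bot].
- rewrite satisfies_level_true //.
  rewrite (@eq_ceval _ _ _ _ (fun x => g' (enum_rank x) != bot)) => [|x];
    last by rewrite ffunE.
  apply: ceval_neq_bot => //; rewrite -ceval_cmap.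
  by apply: contraTneq sat_g' => eq_bot; rewrite /satisfies /= eq_bot lt_geF.
rewrite /wdist -Rsum_enum_val big_mkcond [X in (_ <= X)%R]big_mkcond.
apply: Rsum_le => y _; rewrite /= ffunE enum_valK.
have disagree : f (enum_val y) != (g' y != bot) ->
                embed_bool bot hi (f (enum_val y)) != g' y.
  by case: (f (enum_val y)); apply: contra => /eqP <-; rewrite /= ?eqxx ?(gt_eqF bot_lt_hi).
case: ifP => [/disagree -> | _]; first exact: Rle_refl.
by case: ifP => _; [apply: weight_ge0 | apply: Rle_refl].
Qed.

Lemma embed_reduction_linear (D : R) :
  linear_reduction
    (fun V I => lattice_eval_instance D I /\ ilevel I = true)
    (fun V I => lattice_eval_instance D I) embed_reduction.
Proof.
split; [|split; [|split; [|split; [|split]]]].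
- move=> V I _; split=> [s|]; first exact: Rle_0_1.
  by rewrite /= big_const card_unit /= Rplus_0_r.
- by move=> V I s [evalI _]; apply: embed_instance_lattice_eval.
- by exists 1%N => V I s _; rewrite mul1n.
- by move=> V I s f [_ levelI]; apply: embed_instance_satisfies; rewrite levelI.
- exists R1; split=> [|V I f eps [[_ [weightI _]] levelI] _ eps_le]; first lra.
  pose s : seed embed_reduction I := tt.
  have dist_grows : (R1 * eps <= Defs.dist (outinst embed_reduction s)
                                   (out_assignment embed_reduction s f))%R.
    rewrite Rmult_1_l; apply: Rle_trans eps_le _; apply: embed_instance_dist.
    + by rewrite levelI.
    + by move=> x; case: (weightI x).
  by rewrite big_mkcond (big_pred1 tt) => [|[]//]; case: Rle_dec => //= _; lra.
- by exists 1%N => V I s y; apply: QDQuery => b; apply: QDLeaf.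
Qed.

End EmbedReduction.

Theorem mainTheorem14 :
  forall (d : Order.disp_t) (L : finLatticeType d), (1 < #|L|)%N ->
  forall D : R, (1 < D)%R ->
  exists D' : R, (1 < D')%R /\
  exists r : reduction bool L,
    linear_reduction
      (fun V I => lattice_eval_instance D I /\ ilevel I = true)
      (fun V I => lattice_eval_instance D' I)
      r.
Proof.
move=> d L nontrivialL D D_gt1.
have [bot [hi [bot_lt_hi bot_le]]] := finLattice_bottom_lt nontrivialL.
exists D; split=> //; exists (embed_reduction bot hi).
exact: embed_reduction_linear.
Qed.
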